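(* In any execution of $\mathtt{search}(\mathcal{G},T)$ (defined in the context), consider the lowest region of the decomposition, i.e. an iteration of the inner loop in which the computed region $Z$ equals the whole vertex set $V'$ of the current subgame $\mathcal{G}'$. Then extract-tangles$(Z,\sigma)$ returns at least one tangle.
   Context: Parity games: $\mathcal{G}=(V_0,V_1,E,\mathrm{pr})$, $V=V_0\cup V_1$ finite, partitioned into vertices of Even ($0$) and Odd ($1$); $E\subseteq V\times V$ with every vertex having a successor; $\mathrm{pr}:V\to\{0,\dots,d\}$. $E(u)=\{v:(u,v)\in E\}$, $\mathrm{pr}(U)=\max_{u\in U}\mathrm{pr}(u)$, $\mathrm{pr}^{-1}(p)$ the set of vertices of priority $p$, $\overline{\alpha}=1-\alpha$. A cycle is won by $\alpha$ if its highest priority has parity $\alpha$. A strategy of $\alpha$ is a partial function $\sigma$ on $V_\alpha$ with $\sigma(v)\in E(v)$. For $U\subseteq V$, $\mathcal{G}\cap U$ is the subgame with vertices $V\cap U$ and edges $E\cap(U\times U)$, and $\mathcal{G}\setminus U=\mathcal{G}\cap(V\setminus U)$. A $p$-tangle is a nonempty $U\subseteq V$ with $p=\mathrm{pr}(U)$ such that for $\alpha\equiv p\pmod 2$ there is a strategy $\sigma:U\cap V_\alpha\to U$ (witness strategy $\sigma_T(U)$) with $(U,E\cap(\sigma\cup((U\cap V_{\overline{\alpha}})\times U)))$ strongly connected and all its cycles won by $\alpha$ (''won by $\alpha$''). For a tangle $t$ won by $\alpha$ in a game with edge set $E$, $E_T(t)=\{v\notin t:\exists u\in t\cap V_{\overline{\alpha}},(u,v)\in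 E\}$. $T_\alpha$ denotes the tangles of $T$ won by $\alpha$; for a subgame $\mathcal{G}'$, $T\cap\mathcal{G}'$ denotes the tangles of $T$ contained in its vertex set. Tangle attractor: for a game $\mathcal{G}$ with vertices $V$, tangles $T$, player $\alpha$ and $A\subseteq V$, $\mathit{TAttr}^{\mathcal{G},T}_\alpha(A)$ is the least $Z\supseteq A$ containing every $v\in V_\alpha$ with $E(v)\cap Z\neq\emptyset$, every $v\in V_{\overline{\alpha}}$ with $E(v)\subseteq Z$, and every vertex of every $t\in T_\alpha$ with $\emptyset\neq E_T(t)\subseteq Z$ ($E_T$ computed in $\mathcal{G}$). It is computed iteratively together with a strategy $\sigma$ of $\alpha$ (initially empty): when an $\alpha$-vertex is added individually, $\sigma$ maps it to a successor already in $Z$; each $\alpha$-vertex of $A$ gets as $\sigma$-value a successor in $Z$ once one exists; when the vertices of a tangle $t$ are added, $\sigma(u):=\sigma_T(t)(u)$ for every $\alpha$-vertex $u\in t$ not yet in $\mathrm{dom}(\sigma)$. extract-tangles$(Z,\sigma)$, for a subgame $\mathcal{G}'=(V',E')$ with top priority $p$, $\alpha\equiv p$, region $Z\subseteq V'$ and strategy $\sigma$: let $Y_Z$ be the greatest $X\subseteq Z$ such that every $v\in X\cap V_{\overline{\alpha}}$ has $E'(v)\subseteq X$ and every $v\in X\cap V_\alpha$ has $\sigma(v)\in X$; let $H$ be the graph on $Y_Z$ with edges $(v,\sigma(v))$ for $v\in Y_Z\cap V_\alpha$ and $(v,w)\in E'$ for $v\in Y_Z\cap V_{\overline{\alpha}}$;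 return all bottom strongly connected components of $H$ that contain at least one edge of $H$, each with witness strategy $\sigma$ restricted to it. $\mathtt{search}(\mathcal{G},T)$ (with $T$ a set of tangles of $\mathcal{G}$): repeat forever: set $r:=\emptyset$ (a partial function $V\to\mathbb{N}$, the region function) and $Y:=\emptyset$; while $V\setminus\mathrm{dom}(r)\neq\emptyset$: let $\mathcal{G}':=\mathcal{G}\setminus\mathrm{dom}(r)$ with vertex set $V'$, $T':=T\cap\mathcal{G}'$, $p:=\mathrm{pr}(\mathcal{G}')$, $\alpha:=p\bmod 2$; compute $(Z,\sigma):=\mathit{TAttr}^{\mathcal{G}',T'}_\alpha(\mathrm{pr}^{-1}(p)\cap V')$ (the region of priority $p$); let $A:=$ extract-tangles$(Z,\sigma)$; if some $t\in A$ has $E_T(t)=\emptyset$ with $E_T$ computed in the full game $\mathcal{G}$, return $(T\cup Y,t)$; otherwise set $r(v):=p$ for all $v\in Z$ and $Y:=Y\cup A$. After the while-loop, set $T:=T\cup Y$. *)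

From mathcomp Require Import all_boot.
Set Implicit Arguments. Unset Strict Implicit. Unset Printing Implicit Defensive.

Section ParityDefs.
Variable V : finType.
(* owner v = false : v in V_0 (Even);  owner v = true : v in V_1 (Odd).
   A player alpha is a bool; player of priority p is odd p. *)
Variable owner : V -> bool.
Variable E : rel V.
Variable pr : V -> nat.

(* a (candidate) tangle: a vertex set together with its witness strategy *)
Definition tangle := ({set V} * {ffun V -> option V})%type.

Definition pmax (U : {set V}) : nat := \max_(v in U) pr v.

Definition tangle_rel (U : {set V}) (s : {ffun V -> option V}) (a : bool) : rel V :=
  fun u v => [&& u \in U, v \in U & if owner u == a then s u == Some v else E u v].

Definition is_tangle (t : tangle) : Prop :=
  let U := t.1 in let s := t.2 in let a := odd (pmax U) in
  [/\ U != set0,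
      (forall u, u \in U -> owner u = a -> exists2 w, s u = Some w & (w \in U) && E u w),
      (forall u v, u \in U -> v \in U -> connect (tangle_rel U s a) u v) &
      (forall c : seq V, c != [::] -> cycle (tangle_rel U s a) c ->
          odd (\max_(v <- c) pr v) = a)].

Definition ET (S : {set V}) (t : tangle) : {set V} :=
  [set v in S | (v \notin t.1) &&
     [exists u in t.1, [&& owner u != odd (pmax t.1), u \in S & E u v]]].

Definition upd (s : {ffun V -> option V}) (v w : V) : {ffun V -> option V} :=
  [ffun x => if x == v then Some w else s x].

Definition tangle_upd (s : {ffun V -> option V}) (t : tangle) (a : bool)
  : {ffun V -> option V} :=
  [ffun u => if [&& u \in t.1, owner u == a & s u == None] then t.2 u else s u].

Definition empty_strat : {ffun V -> option V} := [ffun _ => None].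

(* One step of the iterative computation of TAttr^{G',T'}_a(A), G' = G ∩ S *)
Inductive tattr_step (S : {set V}) (Tt : {set tangle}) (a : bool) (A : {set V})
  : ({set V} * {ffun V -> option V}) -> ({set V} * {ffun V -> option V}) -> Prop :=
| ta_alpha (Z : {set V}) (s : {ffun V -> option V}) v w : v \in S -> v \notin Z -> owner v = a -> w \in Z -> E v w ->
    tattr_step S Tt a A (Z, s) (v |: Z, upd s v w)
| ta_nalpha (Z : {set V}) (s : {ffun V -> option V}) v : v \in S -> v \notin Z -> owner v != a ->
    (forall w, w \in S -> E v w -> w \in Z) ->
    tattr_step S Tt a A (Z, s) (v |: Z, s)
| ta_init (Z : {set V}) (s : {ffun V -> option V}) v w : v \in A -> owner v = a -> s v = None -> w \in Z -> E v w ->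
    tattr_step S Tt a A (Z, s) (Z, upd s v w)
| ta_tangle (Z : {set V}) (s : {ffun V -> option V}) (t : tangle) : t \in Tt -> t.1 \subset S -> odd (pmax t.1) = a ->
    ~~ (t.1 \subset Z) -> ET S t != set0 -> ET S t \subset Z ->
    tattr_step S Tt a A (Z, s) (Z :|: t.1, tangle_upd s t a).

Inductive tattr_reach (S : {set V}) (Tt : {set tangle}) (a : bool) (A : {set V})
  : ({set V} * {ffun V -> option V}) -> Prop :=
| tr_init : tattr_reach S Tt a A (A, empty_strat)
| tr_step st st' : tattr_reach S Tt a A st -> tattr_step S Tt a A st st' ->
    tattr_reach S Tt a A st'.

Definition tattr_result (S : {set V}) (Tt : {set tangle}) (a : bool) (A : {set V})
  (Z : {set V}) (s : {ffun V -> option V}) : Prop :=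
  tattr_reach S Tt a A (Z, s) /\ ~ (exists st', tattr_step S Tt a A (Z, s) st').

Definition ext_closed (S : {set V}) (a : bool) (s : {ffun V -> option V})
  (X : {set V}) : bool :=
  [forall v in X, if owner v == a then (if s v is Some w then w \in X else false)
                  else [forall w, (E v w && (w \in S)) ==> (w \in X)]].

Definition YZ (S : {set V}) (a : bool) (Z : {set V}) (s : {ffun V -> option V})
  : {set V} :=
  \bigcup_(X : {set V} | (X \subset Z) && ext_closed S a s X) X.

Definition Hrel (S : {set V}) (a : bool) (Y : {set V}) (s : {ffun V -> option V})
  : rel V :=
  fun u v => [&& u \in Y, v \in Y &
                 if owner u == a then s u == Some v else E u v && (v \in S)].

Definition restrict_strat (s : {ffun V -> option V}) (C : {set V})
  : {ffun V -> option V} := [ffun v => if v \in C then s v else None].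

Definition bscc_with_edge (H : rel V) (Y C : {set V}) : bool :=
  [&& C \subset Y, C != set0,
      [forall u in C, forall v in C, connect H u v],
      [forall u in C, forall v, H u v ==> (v \in C)] &
      [exists u in C, exists v in C, H u v]].

Definition extract_tangles (S : {set V}) (a : bool) (Z : {set V})
  (s : {ffun V -> option V}) : {set tangle} :=
  let Y := YZ S a Z s in
  [set t : tangle | bscc_with_edge (Hrel S a Y s) Y t.1 &&
                    (t.2 == restrict_strat s t.1)].

(* search: the region function r is a finite function V -> option nat *)
Definition domr (r : {ffun V -> option nat}) : {set V} := [set v | r v != None].
Definition empty_r : {ffun V -> option nat} := [ffun _ => None].
Definition subT (T : {set tangle}) (S : {set V}) : {set tangle} :=
  [set t in T | t.1 \subset S].
Definition top_set (S : {set V}) : {set V} := [set v in S | pr v == pmax S].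
Definition set_r (r : {ffun V -> option nat}) (Z : {set V}) (p : nat)
  : {ffun V -> option nat} := [ffun v => if v \in Z then Some p else r v].

(* search_reach T0 T r Y : starting search(G, T0), a state (T, r, Y) is reached
   at the beginning of an iteration of the inner while-loop test. *)
Inductive search_reach (T0 : {set tangle})
  : {set tangle} -> {ffun V -> option nat} -> {set tangle} -> Prop :=
| sr_start : search_reach T0 T0 empty_r set0
| sr_inner (T : {set tangle}) (r : {ffun V -> option nat}) (Y : {set tangle}) (Z : {set V}) (s : {ffun V -> option V}) :
    search_reach T0 T r Y ->
    ~: domr r != set0 ->
    tattr_result (~: domr r) (subT T (~: domr r)) (odd (pmax (~: domr r)))
                 (top_set (~: domr r)) Z s ->
    (forall t, t \in extract_tangles (~: domr r) (odd (pmax (~: domr r))) Z s ->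
               ET [set: V] t != set0) ->
    search_reach T0 T (set_r r Z (pmax (~: domr r)))
                 (Y :|: extract_tangles (~: domr r) (odd (pmax (~: domr r))) Z s)
| sr_outer (T : {set tangle}) (r : {ffun V -> option nat}) (Y : {set tangle}) :
    search_reach T0 T r Y -> ~: domr r = set0 ->
    search_reach T0 (T :|: Y) empty_r set0.

End ParityDefs.

From mathcomp Require Import all_boot.
Set Implicit Arguments. Unset Strict Implicit. Unset Printing Implicit Defensive.

(* In the lowest region the attractor is the whole subgame, so by maximality
   every vertex of the top player [a] gets a strategy move inside it, and since
   the complement of a maximal attractor again has no dead ends, no vertex of
   the subgame is a dead end.  The graph of extract-tangles then covers the
   subgame and has no sinks, so it has a bottom SCC with an edge.
   Maximality only yields strategy moves because every tangle in [T] has its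
   witness strategy defined on [a]-vertices; this is kept invariant along
   [search] since every trap of an attractor meets the top priority, so the
   extracted components have the right parity. *)

Section GraphFacts.
Variables (T : finType) (e : rel T).

Lemma connect_pred_closed (P : pred T) x y :
  (forall u v, P u -> e u v -> P v) -> P x -> connect e x y -> P y.
Proof.
move=> eP Px /connectP [p + ->]; elim: p x Px => //= z p IH x Px /andP [exz].
exact: IH (eP _ _ Px exz).
Qed.

Lemma connect_sub_in (e' : rel T) (P : pred T) x y :
  (forall u v, P u -> e u v -> P v /\ e' u v) -> P x -> connect e x y -> connect e' x y.
Proof.
move=> ee' Px /connectP [p + ->]; elim: p x Px => [|z p IH] x Px /=.
  by rewrite connect0.
case/andP=> exz pz; have [Pz e'xz] := ee' _ _ Px exz.
exact: connect_trans (connect1 e'xz) (IH z Pz pz).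
Qed.

(* The set of vertices reachable from a vertex of Y with the fewest reachable
   vertices is a bottom SCC; it has an edge since no vertex of Y is a dead end. *)
Lemma bscc_with_edge_exists (Y : {set T}) :
  Y != set0 -> (forall u v, e u v -> v \in Y) ->
  (forall u, u \in Y -> exists v, e u v) ->
  exists C, bscc_with_edge e Y C.
Proof.
case/set0Pn=> y0 y0Y eY succY.
pose reach x := [set y | connect e x y].
have [x xY min_x] := arg_minnP (fun x => #|reach x|) y0Y.
have reachY : reach x \subset Y.
  apply/subsetP => y; rewrite inE; exact: connect_pred_closed (fun u v _ => eY u v) xY.
have reach_eq u : u \in reach x -> reach u = reach x.
  move=> ux; apply/eqP; rewrite eqEcard (min_x u (subsetP reachY u ux)) andbT.
  by apply/subsetP => y; rewrite !inE; apply: connect_trans; rewrite inE in ux.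
exists (reach x); apply/and5P; split=> //.
- by apply/set0Pn; exists x; rewrite inE connect0.
- by apply/forall_inP => u /reach_eq <-; apply/forall_inP => v; rewrite inE.
- apply/forall_inP => u /reach_eq <-; apply/forallP => v; apply/implyP => euv.
  by rewrite inE connect1.
- have [w exw] := succY x xY.
  apply/existsP; exists x; rewrite inE connect0 /=.
  by apply/existsP; exists w; rewrite inE connect1.
Qed.

End GraphFacts.

Section Parity.
Variables (V : finType) (owner : V -> bool) (E : rel V) (pr : V -> nat).
Local Notation strategy := {ffun V -> option V}.

Definition witnessed (t : tangle V) :=
  forall u, u \in t.1 -> owner u = odd (pmax pr t.1) ->
    exists2 w, t.2 u = Some w & w \in t.1.

Definition tangle_connected (t : tangle V) :=
  forall u v, u \in t.1 -> v \in t.1 ->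
    connect (tangle_rel owner E t.1 t.2 (odd (pmax pr t.1))) u v.

Definition pretangle t := witnessed t /\ tangle_connected t.

Lemma tangle_pretangle t : is_tangle owner E pr t -> pretangle t.
Proof.
case=> _ wit conn _; split=> // u ut ou.
by have [w -> /andP [wt _]] := wit u ut ou; exists w.
Qed.

Definition deadend_free (S : {set V}) :=
  forall v, v \in S -> exists2 w, w \in S & E v w.

Lemma pmax_top (S C : {set V}) v :
  C \subset S -> v \in C -> v \in top_set pr S -> pmax pr C = pmax pr S.
Proof.
move=> CS vC; rewrite inE => /andP [vS /eqP pv].
apply/eqP; rewrite eqn_leq; apply/andP; split.
  by apply/bigmax_leqP => u uC; apply: leq_bigmax_cond; apply: (subsetP CS).
by rewrite -pv; apply: leq_bigmax_cond.
Qed.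

Section Attractor.
Variables (S : {set V}) (Tt : {set tangle V}) (a : bool) (A : {set V}).

Definition trap (Z : {set V}) (s : strategy) (X : {set V}) :=
  forall u, u \in X ->
    (owner u = a -> exists2 w, s u = Some w & w \in X) /\
    (owner u != a -> forall w, w \in S -> E u w -> w \in Z -> w \in X).

Definition traps_meet_init (Z : {set V}) (s : strategy) :=
  forall X : {set V}, X \subset Z -> X != set0 -> trap Z s X ->
    exists2 v, v \in X & v \in A.

Record attr_inv (Z : {set V}) (s : strategy) : Prop := AttrInv {
  attr_init_sub : A \subset Z;
  attr_strat_range : forall u w, s u = Some w -> w \in Z;
  attr_strat_dom : forall u, s u != None -> u \in Z;
  attr_strat_undef : forall u, u \in Z -> owner u = a -> s u = None -> u \in A;
  attr_traps : traps_meet_init Z s }.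

Lemma traps_meet_init_add1 (Z : {set V}) (s s' : strategy) v :
  v \notin Z -> (forall u, u != v -> s' u = s u) ->
  (forall u w, s u = Some w -> w \in Z) ->
  (forall X : {set V}, trap (v |: Z) s' X -> v \in X ->
     exists2 w, w \in Z & w \in X) ->
  traps_meet_init Z s -> traps_meet_init (v |: Z) s'.
Proof.
move=> vZ s's sZ v_exit traps X XvZ X0 trapX.
have XvZ' u : u \in X -> u != v -> u \in Z.
  by move=> uX uv; have := subsetP XvZ u uX; rewrite in_setU1 (negbTE uv).
have inZ_neq w : w \in Z -> w != v by apply: contraTneq => ->.
have sub : X :\ v \subset Z by apply/subsetP => u /setD1P [uv /XvZ']; apply.
have nonempty : X :\ v != set0.
  have [vX|vX] := boolP (v \in X).
    have [w wZ wX] := v_exit X trapX vX.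
    by apply/set0Pn; exists w; rewrite in_setD1 wX inZ_neq.
  case/set0Pn: X0 => u uX; apply/set0Pn; exists u; rewrite in_setD1 uX andbT.
  by apply: contraNneq vX => <-.
have trapXv : trap Z s (X :\ v).
  move=> u /setD1P [uv uX]; have [alpha opp] := trapX u uX; split.
    move=> ou; have [w] := alpha ou; rewrite s's // => suw wX.
    by exists w; rewrite // in_setD1 wX inZ_neq ?(sZ u w).
  move=> ou w wS euw wZ.
  by rewrite in_setD1 inZ_neq // (opp ou) // in_setU1 wZ orbT.
by have [u /setD1P [_ uX] uA] := traps _ sub nonempty trapXv; exists u.
Qed.

Lemma attr_inv_alpha (Z : {set V}) (s : strategy) v w :
  v \notin Z -> owner v = a -> w \in Z -> attr_inv Z s -> attr_inv (v |: Z) (upd s v w).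
Proof.
move=> vZ ov wZ [AZ sZ domZ undefA traps]; split.
- exact: subset_trans AZ (subsetUr _ _).
- move=> u w'; rewrite ffunE in_setU1.
  by case: (eqVneq u v) => [_ [<-]|_ /sZ ->]; rewrite ?wZ orbT.
- by move=> u; rewrite ffunE in_setU1; case: (eqVneq u v) => //= _ /domZ.
- by move=> u; rewrite ffunE in_setU1; case: (eqVneq u v) => //= _; exact: undefA.
- apply: traps_meet_init_add1 traps => //.
    by move=> u uv; rewrite ffunE (negbTE uv).
  move=> X trapX vX; have [w'] := (trapX v vX).1 ov.
  by rewrite ffunE eqxx => -[<-]; exists w.
Qed.

Hypothesis S_deadend_free : deadend_free S.

Lemma attr_inv_nalpha (Z : {set V}) (s : strategy) v :
  v \in S -> v \notin Z -> owner v != a -> (forall w, w \in S -> E v w -> w \in Z) ->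
  attr_inv Z s -> attr_inv (v |: Z) s.
Proof.
move=> vS vZ ov succZ [AZ sZ domZ undefA traps]; split.
- exact: subset_trans AZ (subsetUr _ _).
- by move=> u w /sZ wZ; rewrite in_setU1 wZ orbT.
- by move=> u /domZ uZ; rewrite in_setU1 uZ orbT.
- move=> u; rewrite in_setU1 => /orP [/eqP -> ov'|]; last exact: undefA.
  by rewrite ov' eqxx in ov.
- apply: traps_meet_init_add1 traps => // X trapX vX.
  have [w wS evw] := S_deadend_free vS; have wZ := succZ w wS evw.
  by exists w; rewrite // ((trapX v vX).2 ov) // in_setU1 wZ orbT.
Qed.

Lemma attr_inv_init (Z : {set V}) (s : strategy) v w :
  v \in A -> owner v = a -> w \in Z -> attr_inv Z s -> attr_inv Z (upd s v w).
Proof.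
move=> vA ov wZ [AZ sZ domZ undefA traps]; split=> //.
- by move=> u w'; rewrite ffunE; case: (eqVneq u v) => [_ [<-]|_ /sZ].
- by move=> u; rewrite ffunE; case: (eqVneq u v) => [->|_ /domZ //]; rewrite (subsetP AZ).
- by move=> u; rewrite ffunE; case: (eqVneq u v) => //= _; exact: undefA.
- move=> X XZ X0 trapX; have [vX|vX] := boolP (v \in X); first by exists v.
  apply: traps => // u uX; have [alpha opp] := trapX u uX; split=> // ou.
  have uv : u != v by apply: contraNneq vX => <-.
  by have [w'] := alpha ou; rewrite ffunE (negbTE uv) => suw'; exists w'.
Qed.

Section TangleStep.
Variables (Z : {set V}) (s : strategy) (t : tangle V).
Hypotheses (t_pre : pretangle t) (tS : t.1 \subset S) (ta : odd (pmax pr t.1) = a).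
Hypotheses (ET0 : ET owner E pr S t != set0) (ETZ : ET owner E pr S t \subset Z).

(* A trap outside Z inside the tangle contains the whole tangle by strong
   connectivity, hence also the target of an escape edge, which lies in Z. *)
Lemma tangle_trap_meets (X : {set V}) :
  (forall u, s u != None -> u \in Z) ->
  X \subset Z :|: t.1 -> X != set0 -> trap (Z :|: t.1) (tangle_upd owner s t a) X ->
  X :&: Z != set0.
Proof.
move=> domZ XZt X0 trapX; apply/negP => /eqP XZ0; move/negP: ET0; apply.
have notZ x : x \in X -> x \notin Z.
  by move=> xX; apply: contra_eqN XZ0 => xZ; apply/set0Pn; exists x; rewrite inE xX.
have Xt x : x \in X -> x \in t.1.
  by move=> xX; have := subsetP XZt x xX; rewrite in_setU (negbTE (notZ x xX)).
have [x xX] := set0Pn _ X0.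
have tX y : y \in t.1 -> y \in X.
  move=> yt; apply: (connect_pred_closed (P := mem X)) (t_pre.2 x y (Xt x xX) yt) => //.
  move=> u v uX; rewrite /tangle_rel ta => /and3P [_ vt].
  have [alpha opp] := trapX u uX.
  case: (eqVneq (owner u) a) => [ou /eqP tuv | ou euv].
    have su : s u = None by apply/eqP; apply: contraNT (notZ u uX); exact: domZ.
    have [w] := alpha ou.
    by rewrite ffunE (Xt u uX) ou eqxx su tuv => -[<-].
  by apply: opp; rewrite // ?(subsetP tS) // in_setU vt orbT.
apply/eqP/setP => y; rewrite in_set0; apply/negP => yET.
move: (yET); rewrite inE => /andP [yS /andP [_]].
case/existsP => u /andP [ut /and3P [ou _ euy]].
have yZ := subsetP ETZ y yET.
have yX : y \in X by apply: (trapX u (tX u ut)).2; rewrite -?ta // in_setU yZ.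
by have := notZ y yX; rewrite yZ.
Qed.

Lemma attr_inv_tangle : attr_inv Z s -> attr_inv (Z :|: t.1) (tangle_upd owner s t a).
Proof.
have [wit _] := t_pre.
have wit_a u : u \in t.1 -> owner u = a -> exists2 w, t.2 u = Some w & w \in t.1.
  by rewrite -ta; exact: wit.
case=> AZ sZ domZ undefA traps; split.
- exact: subset_trans AZ (subsetUl _ _).
- move=> u w; rewrite ffunE; case: ifP => [/and3P [ut /eqP ou _] tuw | _ /sZ wZ].
    have [w' tuw' w't] := wit_a u ut ou; move: tuw; rewrite tuw' => -[<-].
    by rewrite in_setU w't orbT.
  by rewrite in_setU wZ.
- move=> u; rewrite ffunE in_setU.
  by case: ifP => [/and3P [-> _ _] _|_ /domZ ->]; rewrite ?orbT.
- move=> u; rewrite in_setU ffunE => /orP [uZ|ut] ou; case: ifP => [/and3P [ut' _ _]|].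
  + by have [w -> _] := wit_a u ut' ou.
  + by move=> _; exact: undefA.
  + by have [w -> _] := wit_a u ut ou.
  + by rewrite ut ou eqxx /= => /negbT sdef /eqP; rewrite (negbTE sdef).
- move=> X XZt X0 trapX.
  have [/existsP [u /and3P [uXZ /eqP ou /eqP su]]|] :=
    boolP [exists u in X :&: Z, (owner u == a) && (s u == None)].
    by move: uXZ; rewrite inE => /andP [uX uZ]; exists u; last exact: undefA.
  move/exists_inPn => sdef.
  have trapXZ : trap Z s (X :&: Z).
    move=> u uXZ; have [uX uZ] := setIP uXZ; have [alpha opp] := trapX u uX; split.
      move=> ou; have [w] := alpha ou.
      have su : s u != None by have := sdef u uXZ; rewrite ou eqxx.
      rewrite ffunE (negbTE su) !andbF => suw wX.
      by exists w; rewrite // inE wX (sZ _ _ suw).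
    by move=> ou w wS euw wZ; rewrite inE wZ andbT opp // in_setU wZ.
  have [u /setIP [uX _] uA] :=
    traps _ (subsetIr _ _) (tangle_trap_meets domZ XZt X0 trapX) trapXZ.
  by exists u.
Qed.

End TangleStep.

Lemma tattr_reach_sub st :
  A \subset S -> tattr_reach owner E pr S Tt a A st -> st.1 \subset S.
Proof.
move=> AS; elim=> // st0 st' _ IH step; case: step IH => /=.
- by move=> Z s v w vS _ _ _ _ ZS; rewrite subUset sub1set vS.
- by move=> Z s v vS _ _ _ ZS; rewrite subUset sub1set vS.
- by [].
- by move=> Z s t _ tS _ _ _ _ ZS; rewrite subUset tS ZS.
Qed.

Hypothesis Tt_pre : forall t, t \in Tt -> pretangle t.

Lemma tattr_reach_inv st : tattr_reach owner E pr S Tt a A st -> attr_inv st.1 st.2.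
Proof.
elim=> [|st0 st' _ IH step]; last case: step IH => /=.
- split=> //= [u w|u|X XA X0 _]; rewrite ?ffunE //.
  by have [v vX] := set0Pn _ X0; exists v; rewrite // (subsetP XA).
- by move=> Z s v w _ vZ ov wZ _; exact: attr_inv_alpha.
- by move=> Z s v vS vZ ov succZ; exact: attr_inv_nalpha.
- by move=> Z s v w vA ov _ wZ _; exact: attr_inv_init.
- by move=> Z s t /Tt_pre t_pre tS ta _ ET0 ETZ; exact: attr_inv_tangle.
Qed.

Lemma tattr_result_strategy (Z : {set V}) (s : strategy) v w :
  tattr_result owner E pr S Tt a A Z s -> v \in Z -> owner v = a -> w \in Z -> E v w ->
  exists2 w', s v = Some w' & w' \in Z.
Proof.
move=> [reach maximal] vZ ov wZ evw; have inv := tattr_reach_inv reach.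
case sv: (s v) => [w'|]; first by exists w'; rewrite // (attr_strat_range inv sv).
have vA := attr_strat_undef inv vZ ov sv.
by case: maximal; eexists; exact: ta_init vA ov sv wZ evw.
Qed.

Lemma tattr_result_deadend_free (Z : {set V}) (s : strategy) :
  tattr_result owner E pr S Tt a A Z s -> deadend_free (S :\: Z).
Proof.
move=> [_ maximal] v /setDP [vS vZ].
have [/existsP [w /and3P [wS wZ evw]]|/existsPn stuck] :=
  boolP [exists w, [&& w \in S, w \notin Z & E v w]].
  by exists w; rewrite ?inE ?wS ?wZ.
case: maximal; case: (eqVneq (owner v) a) => [ov|ov].
  have [w wS evw] := S_deadend_free vS.
  have wZ : w \in Z by move: (stuck w); rewrite wS evw andbT negbK.
  by eexists; exact: ta_alpha vS vZ ov wZ evw.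
eexists; apply: ta_nalpha vS vZ ov _ => w wS evw.
by move: (stuck w); rewrite wS evw andbT negbK.
Qed.

End Attractor.

Lemma YZ_sub S a Z (s : strategy) : YZ owner E S a Z s \subset Z.
Proof. by apply/bigcupsP => X /andP []. Qed.

Lemma YZ_closed S a Z (s : strategy) u : u \in YZ owner E S a Z s ->
  (owner u = a -> exists2 w, s u = Some w & w \in YZ owner E S a Z s) /\
  (owner u != a -> forall w, E u w -> w \in S -> w \in YZ owner E S a Z s).
Proof.
case/bigcupP => X /andP [XZ /forall_inP closedX] uX.
have XY : X \subset YZ owner E S a Z s.
  by apply: bigcup_sup; rewrite XZ; apply/forall_inP.
have cu := closedX u uX; split.
  move=> ou; move: cu; rewrite ou eqxx; case: (s u) => // w wX.
  by exists w; rewrite // (subsetP XY).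
move=> ou w euw wS; move: cu; rewrite (negbTE ou) => /forallP /(_ w).
by rewrite euw wS => /(subsetP XY).
Qed.

Section TotalStrategy.
Variables (S : {set V}) (a : bool) (s : strategy).
Hypothesis s_total :
  forall v, v \in S -> owner v = a -> exists2 w, s v = Some w & w \in S.

Lemma YZ_total : YZ owner E S a S s = S.
Proof.
apply/eqP; rewrite eqEsubset YZ_sub; apply: bigcup_sup; rewrite subxx.
apply/forall_inP => v vS; case: ifP => [/eqP ov|_].
  by have [w -> wS] := s_total vS ov.
by apply/forallP => w; apply/implyP => /andP [].
Qed.

Lemma Hrel_total :
  deadend_free S -> forall u, u \in S -> exists v, Hrel owner E S a S s u v.
Proof.
move=> S_df u uS; rewrite /Hrel uS; case: (eqVneq (owner u) a) => [ou|ou].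
  by have [w suw wS] := s_total uS ou; exists w; rewrite wS suw eqxx.
by have [w wS euw] := S_df u uS; exists w; rewrite wS euw.
Qed.

End TotalStrategy.

(* Extracted components are traps of the attractor, so by the attractor invariant
   they contain a vertex of top priority and hence have parity [a]. *)
Lemma extracted_pretangle (S Z : {set V}) (s : strategy) t :
  Z \subset S -> attr_inv S (odd (pmax pr S)) (top_set pr S) Z s ->
  t \in extract_tangles owner E S (odd (pmax pr S)) Z s -> pretangle t.
Proof.
set a := odd (pmax pr S); set Y := YZ owner E S a Z s.
move=> ZS inv; rewrite inE => /andP [/and5P [CY C0 scc bottom _] /eqP t2].
have closedC u v : u \in t.1 -> Hrel owner E S a Y s u v -> v \in t.1.
  by move=> uC huv; move/forall_inP: bottom => /(_ u uC) /forallP /(_ v); rewrite huv.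
have trapC : trap S a Z s t.1.
  move=> u uC; have uY := subsetP CY u uC; have [alpha opp] := YZ_closed uY; split.
    move=> ou; have [w suw wY] := alpha ou; exists w => //.
    by apply: (closedC u) => //; rewrite /Hrel uY wY ou suw !eqxx.
  move=> ou w wS euw _; have wY := opp ou w euw wS.
  by apply: (closedC u) => //; rewrite /Hrel uY wY (negbTE ou) euw wS.
have CZ : t.1 \subset Z := subset_trans CY (YZ_sub _ _ _ _).
have [v vC vtop] := attr_traps inv CZ C0 trapC.
have ta : odd (pmax pr t.1) = a by rewrite (pmax_top (subset_trans CZ ZS) vC vtop).
split.
  move=> u uC; rewrite ta => ou; have [w suw wC] := (trapC u uC).1 ou.
  by exists w; rewrite // t2 ffunE uC.
move=> u w uC wC; rewrite ta.
have cuw := forall_inP (forall_inP scc u uC) w wC.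
apply: (connect_sub_in (P := mem t.1)) cuw => // x y xC hxy.
have {}xC : x \in t.1 := xC; have yC := closedC x y xC hxy; split=> //.
move: hxy; rewrite /Hrel /tangle_rel xC yC t2 ffunE xC /=.
by case/and3P => _ _; case: (owner x == a) => // /andP [].
Qed.

Lemma compl_domr_set_r (r : {ffun V -> option nat}) (Z : {set V}) p :
  ~: domr (set_r r Z p) = ~: domr r :\: Z.
Proof. by apply/setP => v; rewrite !inE ffunE; case: (v \in Z). Qed.

Lemma compl_domr_empty : ~: domr (@empty_r V) = setT.
Proof. by apply/setP => v; rewrite !inE ffunE. Qed.

Record search_inv (T Y : {set tangle V}) (r : {ffun V -> option nat}) : Prop :=
  SearchInv {
    search_T_pre : forall t, t \in T -> pretangle t;
    search_Y_pre : forall t, t \in Y -> pretangle t;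
    search_deadend_free : deadend_free (~: domr r) }.

Lemma search_reach_inv (T0 T Y : {set tangle V}) (r : {ffun V -> option nat}) :
  (forall v, exists w, E v w) -> (forall t, t \in T0 -> is_tangle owner E pr t) ->
  search_reach owner E pr T0 T r Y -> search_inv T Y r.
Proof.
move=> Etotal T0_tangles.
have setT_df : deadend_free setT by move=> v _; have [w evw] := Etotal v; exists w.
elim=> {T r Y} [|T r Y Z s _ [T_pre Y_pre S_df] _ [reach maximal] _
               |T r Y _ [T_pre Y_pre _] _].
- split; rewrite ?compl_domr_empty // => t; last by rewrite inE.
  by move/T0_tangles/tangle_pretangle.
- set S := ~: domr r in S_df reach maximal *.
  have topS : top_set pr S \subset S by apply/subsetP => v /[!inE] /andP [].
  have Tt_pre t : t \in subT T S -> pretangle t by rewrite inE => /andP [/T_pre].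
  split=> //.
  + move=> t /setUP [/Y_pre //|]; apply: extracted_pretangle.
      exact: tattr_reach_sub topS reach.
    exact: (tattr_reach_inv S_df Tt_pre reach).
  + rewrite compl_domr_set_r.
    exact: (tattr_result_deadend_free S_df (conj reach maximal)).
- split; rewrite ?compl_domr_empty // => t; last by rewrite inE.
  by case/setUP => [/T_pre|/Y_pre].
Qed.

End Parity.

Theorem lemma6 (V : finType) (owner : V -> bool) (E : rel V) (pr : V -> nat)
  (Htot : forall v : V, exists w, E v w)
  (T0 : {set tangle V})
  (HT0 : forall t, t \in T0 -> is_tangle owner E pr t)
  (T : {set tangle V}) (r : {ffun V -> option nat}) (Y : {set tangle V})
  (Z : {set V}) (s : {ffun V -> option V}) :
  search_reach owner E pr T0 T r Y ->
  ~: domr r != set0 ->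
  tattr_result owner E pr (~: domr r) (subT T (~: domr r))
     (odd (pmax pr (~: domr r))) (top_set pr (~: domr r)) Z s ->
  Z = ~: domr r ->
  extract_tangles owner E (~: domr r) (odd (pmax pr (~: domr r))) Z s != set0.
Proof.
move=> reach S0 res EZ; subst Z; set S := ~: domr r in S0 res *.
set a := odd (pmax pr S) in res *.
have [T_pre _ S_df] := search_reach_inv Htot HT0 reach.
have Tt_pre t : t \in subT T S -> pretangle owner E pr t.
  by rewrite inE => /andP [/T_pre].
have s_total v : v \in S -> owner v = a -> exists2 w, s v = Some w & w \in S.
  move=> vS ov; have [w wS evw] := S_df v vS.
  exact: (tattr_result_strategy S_df Tt_pre res vS ov wS evw).
have [C bscc] : exists C, bscc_with_edge (Hrel owner E S a S s) S C.
  apply: bscc_with_edge_exists S0 _ (Hrel_total s_total S_df).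
  by move=> u v /and3P [].
by apply/set0Pn; exists (C, restrict_strat s C); rewrite inE /= YZ_total // bscc eqxx.
Qed.
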